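(* Let $Q\succeq0$, $q\in\mathbb{R}^n$, $A\succ0$, $v\in\mathbb{R}^n$, and let $m>0$ satisfy Requirement 2 (see context). Let $k\in\mathbb{N}$ and $0<\gamma_k\le 1/L_k$. If $x_k\in\mathcal{C}$, then $x_{k+1}:=x_k-\gamma_k\nabla J_k(x_k)\in\mathcal{C}$. That is, $\mathcal{C}$ is positively invariant under the gradient step.
   Context: $Q\in\mathbb{R}^{n\times n}$ symmetric positive semidefinite, $A\in\mathbb{R}^{n\times n}$ symmetric positive definite. $f(x)=\tfrac12 x^\top Qx+q^\top x$, $g(x)=(x-v)^\top A(x-v)$, $\mathcal{C}=\{x:g(x)\le1\}$, $\partial\mathcal{C}=\{x:g(x)=1\}$, $J_k(x)=f(x)+\frac{m}{k}g(x)^k$ for $k\in\mathbb{N}=\{1,2,\dots\}$, $L_k=\bar\sigma(Q+m(4k-2)A)$ (in particular $L_1=\bar\sigma(Q+2mA)$), where $\bar\sigma,\underline\sigma$ denote largest/smallest singular value. Let $r=\sqrt{\underline\sigma(A)}/\bar\sigma(A)$. Requirement 2: with $w(x)=\nabla f(x)+m\nabla g(x)$, for every $x\in\partial\mathcal{C}$ one has $\|w(x)\|\le 2rL_1\cos\phi(x)$, where $\cos\phi(x)=\frac{\langle w(x),\nabla g(x)\rangle}{\|w(x)\|\,\|\nabla g(x)\|}$ (equivalently, $\|w(x)\|^2\|\nabla g(x)\|\le 2rL_1\langle w(x),\nabla g(x)\rangle$ for all $x\in\partial\mathcal{C}$, which also covers $w(x)=0$). (The paper phrases this as $m\ge m_{\mathrm{inv}}$,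 the smallest $m\ge0$ satisfying this condition.) Requirement 2 implies $\langle\nabla g(x),w(x)\rangle\ge0$ on $\partial\mathcal{C}$. *)

From HB Require Import structures.
From mathcomp Require Import all_boot all_order all_algebra.
From mathcomp Require Import all_classical all_reals.
Set Implicit Arguments. Unset Strict Implicit. Unset Printing Implicit Defensive.
Import Order.TTheory GRing.Theory Num.Theory.
Local Open Scope ring_scope.
Local Open Scope classical_set_scope.

Section Defs.
Variables (R : realType) (n : nat).

Definition dot (x y : 'cV[R]_n) : R := (x^T *m y) 0 0.
Definition vnorm (x : 'cV[R]_n) : R := Num.sqrt (dot x x).

Definition is_symmetric (M : 'M[R]_n) : Prop := M^T = M.
Definition psdmx (M : 'M[R]_n) : Prop := forall x : 'cV[R]_n, 0 <= dot x (M *m x).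
Definition pdmx (M : 'M[R]_n) : Prop :=
  forall x : 'cV[R]_n, x != 0 -> 0 < dot x (M *m x).

Definition sigma_max (M : 'M[R]_n) : R :=
  Num.sqrt (sup [set s : R | eigenvalue (M^T *m M) s]).
Definition sigma_min (M : 'M[R]_n) : R :=
  Num.sqrt (inf [set s : R | eigenvalue (M^T *m M) s]).

Definition ffun (Q : 'M[R]_n) (q x : 'cV[R]_n) : R :=
  2^-1 * dot x (Q *m x) + dot q x.
Definition gfun (A : 'M[R]_n) (v x : 'cV[R]_n) : R := dot (x - v) (A *m (x - v)).
Definition Jfun (Q A : 'M[R]_n) (q v : 'cV[R]_n) (m : R) (k : nat) (x : 'cV[R]_n) : R :=
  ffun Q q x + m / k%:R * gfun A v x ^+ k.

(* gradients (closed forms, valid for symmetric Q and A) *)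
Definition gradf (Q : 'M[R]_n) (q x : 'cV[R]_n) : 'cV[R]_n := Q *m x + q.
Definition gradg (A : 'M[R]_n) (v x : 'cV[R]_n) : 'cV[R]_n := 2 *: (A *m (x - v)).
Definition gradJ (Q A : 'M[R]_n) (q v : 'cV[R]_n) (m : R) (k : nat) (x : 'cV[R]_n)
  : 'cV[R]_n :=
  gradf Q q x + (m * gfun A v x ^+ k.-1) *: gradg A v x.

Definition inC (A : 'M[R]_n) (v x : 'cV[R]_n) : Prop := gfun A v x <= 1.

Definition Lk (Q A : 'M[R]_n) (m : R) (k : nat) : R :=
  sigma_max (Q + (m * (4 * k%:R - 2)) *: A).

Definition rA (A : 'M[R]_n) : R := Num.sqrt (sigma_min A) / sigma_max A.

Definition requirement2 (Q A : 'M[R]_n) (q v : 'cV[R]_n) (m : R) : Prop :=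
  forall x : 'cV[R]_n, gfun A v x = 1 ->
    let w := gradf Q q x + m *: gradg A v x in
    vnorm w ^+ 2 * vnorm (gradg A v x)
      <= 2 * rA A * Lk Q A m 1 * dot w (gradg A v x).

End Defs.

From HB Require Import structures.
From mathcomp Require Import all_boot all_order all_algebra.
From mathcomp Require Import all_classical all_reals.
From mathcomp Require Import complex.
From mathcomp Require Import ring lra.
Set Implicit Arguments. Unset Strict Implicit. Unset Printing Implicit Defensive.
Import Order.TTheory GRing.Theory Num.Theory.
Local Open Scope ring_scope.

(* On the boundary g = 1 the gradient of J_k is w = grad f + m grad g, and the step
   b - gamma w stays in C as soon as gamma w^T A w <= <w, grad g>.  This follows from
   Requirement 2, w^T A w <= sigma_max(A) |w|^2, |grad g| >= 2 sqrt(sigma_min(A)) and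
   gamma L_1 <= gamma L_k <= 1.
   For x inside C, let e = x_{k+1} - v and move x along A e to the boundary point
   b = x + s A e.  On C, <grad J_k(b) - grad J_k(x), b - x> <= L_k |b - x|^2 (a scalar
   inequality on the powers of g, with sigma_max bounding the quadratic form of
   Q + m(4k-2)A), so with e_b = b_{k+1} - v we get <e_b - e, A e> >= 0, whence
   e^T A e <= e_b^T A e <= sqrt(e_b^T A e_b) sqrt(e^T A e) <= sqrt(e^T A e). *)

Section Dot.
Variables (R : realType) (n : nat).
Implicit Types (x y z : 'cV[R]_n) (M : 'M[R]_n).

Lemma dotE x y : dot x y = \sum_i x i 0 * y i 0.
Proof. by rewrite /dot mxE; apply: eq_bigr => i _; rewrite mxE. Qed.

Lemma dotC x y : dot x y = dot y x.
Proof. by rewrite !dotE; apply: eq_bigr => i _; rewrite mulrC. Qed.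

Lemma dotDl x y z : dot (x + y) z = dot x z + dot y z.
Proof. by rewrite !dotE -big_split; apply: eq_bigr => i _; rewrite mxE mulrDl. Qed.

Lemma dotDr x y z : dot z (x + y) = dot z x + dot z y.
Proof. by rewrite ![dot z _]dotC dotDl. Qed.

Lemma dotZl a x y : dot (a *: x) y = a * dot x y.
Proof. by rewrite !dotE mulr_sumr; apply: eq_bigr => i _; rewrite mxE mulrA. Qed.

Lemma dotZr a x y : dot y (a *: x) = a * dot y x.
Proof. by rewrite ![dot y _]dotC dotZl. Qed.

Lemma dotNl x y : dot (- x) y = - dot x y.
Proof. by rewrite -scaleN1r dotZl mulN1r. Qed.

Lemma dotNr x y : dot y (- x) = - dot y x.
Proof. by rewrite ![dot y _]dotC dotNl. Qed.

Lemma dotBl x y z : dot (x - y) z = dot x z - dot y z.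
Proof. by rewrite dotDl dotNl. Qed.

Lemma dotBr x y z : dot z (x - y) = dot z x - dot z y.
Proof. by rewrite dotDr dotNr. Qed.

Lemma dot0l x : dot 0 x = 0.
Proof. by rewrite dotE big1 // => i _; rewrite mxE mul0r. Qed.

Lemma dot0r x : dot x 0 = 0.
Proof. by rewrite dotC dot0l. Qed.

Lemma dot_ge0 x : 0 <= dot x x.
Proof. by rewrite dotE sumr_ge0 // => i _; rewrite -expr2 sqr_ge0. Qed.

Lemma dot_eq0 x : (dot x x == 0) = (x == 0).
Proof.
apply/idP/eqP => [|->]; last by rewrite dot0l.
rewrite dotE psumr_eq0 => [/allP x0|i _]; last by rewrite -expr2 sqr_ge0.
apply/matrixP => i j; rewrite ord1 mxE.
by have := x0 i (mem_index_enum _); rewrite -expr2 sqrf_eq0 => /eqP.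
Qed.

Lemma dot_gt0 x : (0 < dot x x) = (x != 0).
Proof. by rewrite lt_def dot_eq0 dot_ge0 andbT. Qed.

Lemma dot_mulmxr x M y : dot x (M *m y) = dot (M^T *m x) y.
Proof. by rewrite /dot trmx_mul trmxK mulmxA. Qed.

Lemma dot_mulmx_sym x M y : M^T = M -> dot x (M *m y) = dot y (M *m x).
Proof. by move=> sM; rewrite dot_mulmxr sM dotC. Qed.

Lemma vnorm_sqr x : vnorm x ^+ 2 = dot x x.
Proof. by rewrite /vnorm sqr_sqrtr // dot_ge0. Qed.

Lemma vnorm_ge0 x : 0 <= vnorm x.
Proof. exact: sqrtr_ge0. Qed.

End Dot.

Section QuadraticForm.
Variables (R : realType) (n : nat).
Implicit Types (x y : 'cV[R]_n) (A : 'M[R]_n).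

Lemma pdmx_psdmx A : pdmx A -> psdmx A.
Proof.
move=> pA x; have [->|x0] := eqVneq x 0; first by rewrite dot0l.
exact/ltW/pA.
Qed.

Lemma quadform_lincomb A (a b : R) x y : A^T = A ->
  dot (a *: x + b *: y) (A *m (a *: x + b *: y)) =
  a ^+ 2 * dot x (A *m x) + 2 * a * b * dot x (A *m y) + b ^+ 2 * dot y (A *m y).
Proof.
move=> sA; rewrite mulmxDr -!scalemxAr dotDl !dotDr !dotZl !dotZr.
rewrite (dot_mulmx_sym y x sA); ring.
Qed.

Lemma quadform_cauchy_schwarz A x y : A^T = A -> pdmx A ->
  dot x (A *m y) ^+ 2 <= dot x (A *m x) * dot y (A *m y).
Proof.
move=> sA pA; have [->|y0] := eqVneq y 0.
  by rewrite mulmx0 dot0r dot0l expr0n /= mulr0.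
have Ay_gt0 := pA y y0.
set P := dot x (A *m x); set c := dot x (A *m y); set S := dot y (A *m y).
have := pdmx_psdmx pA (S *: x + (- c) *: y); rewrite quadform_lincomb // -/P -/c -/S.
have -> : S ^+ 2 * P + 2 * S * - c * c + (- c) ^+ 2 * S = S * (S * P - c ^+ 2) by ring.
by rewrite pmulr_rge0 // subr_ge0 mulrC.
Qed.

End QuadraticForm.

Section Spectral.
Variables (R : realType) (n : nat).
Local Notation toC := (real_complex R).
Local Open Scope sesquilinear_scope.

Lemma real_complex_real (k : R) : toC k \is Num.real.
Proof. by apply/complex_realP; exists k. Qed.

Lemma trmx_map_real_complex (h : 'cV[R]_n) : (map_mx toC h)^T = (map_mx toC h)^t*.
Proof. by apply/matrixP => i j; rewrite !mxE conj_Creal ?real_complex_real. Qed.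

Lemma real_complex_dot (h k : 'cV[R]_n) :
  toC (dot h k) = ((map_mx toC h)^t* *m map_mx toC k) 0 0.
Proof. by rewrite -trmx_map_real_complex map_trmx -map_mxM /dot [RHS]mxE. Qed.

Lemma symmetric_complex_spectral (M : 'M[R]_n) : M^T = M ->
  exists (U : 'M[R[i]]_n) (d : 'I_n -> R),
    [/\ U^t* *m U = 1%:M, U *m U^t* = 1%:M &
        map_mx toC M = U^t* *m diag_mx (\row_i toC (d i)) *m U].
Proof.
move=> sM; set Mc := map_mx toC M.
have herm : Mc \is hermsymmx.
  apply/is_hermitianmxP; rewrite expr0 scale1r; apply/matrixP => i j.
  by rewrite !mxE conj_Creal ?real_complex_real // -{1}sM mxE.
have /orthomx_spectralP Mdec := hermitian_normalmx herm.
have Uu := spectral_unitarymx Mc.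
have /mxOverP Dreal := hermitian_spectral_diag_real herm.
rewrite invmx_unitary // in Mdec.
exists (spectralmx Mc), (fun i => complex.Re (spectral_diag Mc 0 i)); split.
- exact/mulmx1C/unitarymxP.
- exact/unitarymxP.
- rewrite {1}Mdec; congr (_ *m diag_mx _ *m _); apply/matrixP => i j.
  by rewrite (ord1 i) mxE RRe_real.
Qed.

Lemma quadform_diag_unitary (U : 'M[R[i]]_n) (e : 'rV[R[i]]_n) (z : 'cV[R[i]]_n) :
  (z^t* *m U^t* *m diag_mx e *m U *m z) 0 0 =
  \sum_i e 0 i * (((U *m z) i 0)^* * (U *m z) i 0).
Proof.
have -> : z^t* *m U^t* = (U *m z)^t* by rewrite trmx_mul map_mxM.
rewrite -mulmxA mxE; apply: eq_bigr => i _.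
by rewrite mul_mx_diag !mxE mulrCA mulrA.
Qed.

Lemma unitary_diag_eigenvalue (U : 'M[R[i]]_n) (D : 'rV[R[i]]_n) i :
  U *m U^t* = 1%:M -> eigenvalue (U^t* *m diag_mx D *m U) (D 0 i).
Proof.
move=> UUt; apply/eigenvalueP; exists (delta_mx 0 i *m U).
  rewrite !mulmxA -(mulmxA _ U) UUt mulmx1 scalemxAl; congr (_ *m _).
  apply/matrixP => a b; rewrite mul_mx_diag !mxE.
  by case: (eqVneq b i) => [->|nb]; rewrite ?andbF ?mul0r ?mulr0 // mulrC.
apply/negP => /eqP /(congr1 (mulmx^~ (U^t*))).
rewrite -mulmxA UUt mulmx1 mul0mx => /matrixP /(_ 0 i); rewrite !mxE !eqxx /=.
by move/eqP; rewrite oner_eq0.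
Qed.

(* [d] lists the eigenvalues of [M] and [om h i] is the squared modulus of the
   [i]-th coordinate of [h] in an orthonormal eigenbasis. *)
Definition spectral_weights (M : 'M[R]_n) (d : 'I_n -> R)
    (om : 'cV[R]_n -> 'I_n -> R) : Prop :=
  [/\ forall (h : 'cV[R]_n) i, 0 <= om h i,
      forall h : 'cV[R]_n, dot h h = \sum_i om h i,
      forall h : 'cV[R]_n, dot h (M *m h) = \sum_i d i * om h i,
      forall h : 'cV[R]_n, dot (M *m h) (M *m h) = \sum_i d i ^+ 2 * om h i &
      forall i, eigenvalue M (d i)].

Lemma symmetric_spectral_weights (M : 'M[R]_n) : M^T = M ->
  exists d om, spectral_weights M d om.
Proof.
move=> sM; have [U [d [UtU UUt Mdec]]] := symmetric_complex_spectral sM.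
pose xi (h : 'cV[R]_n) := U *m map_mx toC h.
pose om h i := complex.Re (((xi h) i 0)^* * (xi h) i 0).
have omE h i : ((xi h) i 0)^* * (xi h) i 0 = toC (om h i).
  by rewrite RRe_real // ger0_real // mulrC mul_conjC_ge0.
have sum_om h (f : 'I_n -> R) :
    ((map_mx toC h)^t* *m U^t* *m diag_mx (\row_i toC (f i)) *m U *m map_mx toC h) 0 0
    = toC (\sum_i f i * om h i).
  rewrite quadform_diag_unitary rmorph_sum; apply: eq_bigr => i _.
  by rewrite mxE omE rmorphM.
exists d, om; split.
- by move=> h i; rewrite -(@lecR R) -omE mulrC mul_conjC_ge0.
- move=> h; apply: (@complexI R); rewrite real_complex_dot.
  have row1 : \row_(i < n) toC 1 = const_mx 1.
    by apply/matrixP => ? ?; rewrite !mxE rmorph1.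
  have := sum_om h (fun=> 1).
  rewrite row1 diag_const_mx mulmx1 -(mulmxA _ _ U) UtU mulmx1 => ->.
  by congr toC; apply: eq_bigr => i _; rewrite mul1r.
- by move=> h; apply: (@complexI R); rewrite real_complex_dot map_mxM Mdec -sum_om !mulmxA.
- move=> h; apply: (@complexI R); rewrite dot_mulmxr dotC sM real_complex_dot !map_mxM Mdec.
  have DD : diag_mx (\row_i toC (d i)) *m diag_mx (\row_i toC (d i)) =
            diag_mx (\row_i toC (d i ^+ 2)).
    rewrite mulmx_diag; congr diag_mx.
    by apply/matrixP => ? ?; rewrite !mxE -rmorphM expr2.
  by rewrite -sum_om -DD !mulmxA -(mulmxA _ U (U^t*)) UUt mulmx1.
- move=> i; rewrite -(eigenvalue_map toC) Mdec.
  by have := unitary_diag_eigenvalue (\row_j toC (d j)) i UUt; rewrite mxE.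
Qed.

End Spectral.

Section SingularValues.
Variables (R : realType) (n : nat).
Local Open Scope classical_set_scope.
Implicit Types (M : 'M[R]_n) (h : 'cV[R]_n).

Lemma symmetric_eigenvector M a : M^T = M -> eigenvalue M a ->
  exists2 h, 0 < dot h h & M *m h = a *: h.
Proof.
move=> sM /eigenvalueP [u Hu u0]; exists u^T; first by rewrite dot_gt0 trmx_eq0.
by rewrite -{1}sM -trmx_mul Hu linearZ.
Qed.

Lemma psdmx_eigenvalue_ge0 M a : M^T = M -> psdmx M -> eigenvalue M a -> 0 <= a.
Proof.
move=> sM pM /(symmetric_eigenvector sM) [h h0 Hh].
by have := pM h; rewrite Hh dotZr pmulr_lge0.
Qed.

Lemma eigenvalue_gram_sqr M a : M^T = M -> eigenvalue M a ->
  eigenvalue (M^T *m M) (a ^+ 2).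
Proof.
move=> sM /eigenvalueP [u Hu u0]; apply/eigenvalueP; exists u => //.
by rewrite sM mulmxA Hu -scalemxAl Hu scalerA expr2.
Qed.

Lemma eigenvalue_gram_weights M d om s : M^T = M -> spectral_weights M d om ->
  eigenvalue (M^T *m M) s ->
  exists2 h, 0 < \sum_i om h i & s * \sum_i om h i = \sum_i d i ^+ 2 * om h i.
Proof.
move=> sM [_ omS _ omM _].
have sMM : (M^T *m M)^T = M^T *m M by rewrite trmx_mul trmxK.
move=> /(symmetric_eigenvector sMM) [h h0 Hh]; exists h; rewrite -omS //.
by rewrite -dotZl -Hh -mulmxA -dot_mulmxr omM.
Qed.

Lemma gram_eigenvalue_le M d om s B : M^T = M -> spectral_weights M d om ->
  (forall i, d i ^+ 2 <= B) -> eigenvalue (M^T *m M) s -> s <= B.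
Proof.
move=> sM w dB /(eigenvalue_gram_weights sM w) [h h0 Hh]; have [om0 _ _ _ _] := w.
by rewrite -(ler_pM2r h0) Hh mulr_sumr ler_sum // => i _; rewrite ler_wpM2r.
Qed.

Lemma gram_eigenvalue_ge M d om s B : M^T = M -> spectral_weights M d om ->
  (forall i, B <= d i ^+ 2) -> eigenvalue (M^T *m M) s -> B <= s.
Proof.
move=> sM w dB /(eigenvalue_gram_weights sM w) [h h0 Hh]; have [om0 _ _ _ _] := w.
by rewrite -(ler_pM2r h0) Hh mulr_sumr ler_sum // => i _; rewrite ler_wpM2r.
Qed.

Lemma abs_eigenvalue_le_sigma_max M a : M^T = M -> eigenvalue M a ->
  `|a| <= sigma_max M.
Proof.
move=> sM Ea; have [d [om w]] := symmetric_spectral_weights sM.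
have bounded : has_ubound [set s | eigenvalue (M^T *m M) s].
  exists (\sum_j d j ^+ 2) => s; apply: (gram_eigenvalue_le sM w) => i.
  by rewrite (bigD1 i) //= lerDl sumr_ge0 // => j _; rewrite sqr_ge0.
have a2_le : a ^+ 2 <= sup [set s | eigenvalue (M^T *m M) s].
  exact: ub_le_sup bounded _ (eigenvalue_gram_sqr sM Ea).
by rewrite /sigma_max -sqrtr_sqr ler_sqrt // (le_trans (sqr_ge0 a)).
Qed.

Lemma sigma_min_le_abs_eigenvalue M a : M^T = M -> eigenvalue M a ->
  sigma_min M <= `|a|.
Proof.
move=> sM Ea; have [d [om w]] := symmetric_spectral_weights sM.
have bounded : has_lbound [set s | eigenvalue (M^T *m M) s].
  by exists 0 => s; apply: (gram_eigenvalue_ge sM w) => i; rewrite sqr_ge0.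
rewrite /sigma_min -sqrtr_sqr ler_sqrt ?sqr_ge0 //.
exact: ge_inf bounded _ (eigenvalue_gram_sqr sM Ea).
Qed.

Lemma quadform_le_sigma_max M h : M^T = M -> dot h (M *m h) <= sigma_max M * dot h h.
Proof.
move=> sM; have [d [om [om0 omS omQ _ Ed]]] := symmetric_spectral_weights sM.
rewrite omQ omS mulr_sumr ler_sum // => i _; rewrite ler_wpM2r //.
exact: le_trans (ler_norm _) (abs_eigenvalue_le_sigma_max sM (Ed i)).
Qed.

Lemma sigma_min_mul_quadform_le M h : M^T = M -> psdmx M ->
  sigma_min M * dot h (M *m h) <= dot (M *m h) (M *m h).
Proof.
move=> sM pM; have [d [om [om0 _ omQ omM Ed]]] := symmetric_spectral_weights sM.
rewrite omQ omM mulr_sumr ler_sum // => i _.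
have d0 := psdmx_eigenvalue_ge0 sM pM (Ed i).
rewrite mulrA ler_wpM2r // expr2 ler_wpM2r //.
by rewrite -[d i]ger0_norm ?sigma_min_le_abs_eigenvalue.
Qed.

Lemma sigma_max_le M1 M2 : (0 < n)%N -> M1^T = M1 -> M2^T = M2 -> psdmx M1 ->
  (forall h, dot h (M1 *m h) <= dot h (M2 *m h)) -> sigma_max M1 <= sigma_max M2.
Proof.
move=> n0 s1 s2 p1 le12; have [d [om w]] := symmetric_spectral_weights s1.
have [_ _ _ _ Ed] := w.
have d_le i : d i ^+ 2 <= sigma_max M2 ^+ 2.
  have [h h0 Hh] := symmetric_eigenvector s1 (Ed i).
  have d0 := psdmx_eigenvalue_ge0 s1 p1 (Ed i).
  have : d i * dot h h <= sigma_max M2 * dot h h.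
    by rewrite -dotZr -Hh (le_trans (le12 h)) // quadform_le_sigma_max.
  by rewrite ler_pM2r // => dle; rewrite ler_pXn2r // nnegrE // sqrtr_ge0.
have sup_le : sup [set s | eigenvalue (M1^T *m M1) s] <= sigma_max M2 ^+ 2.
  apply: ge_sup; last by move=> s; apply: (gram_eigenvalue_le s1 w).
  by exists (d (Ordinal n0) ^+ 2); exact: eigenvalue_gram_sqr s1 (Ed _).
by rewrite -[sigma_max M2]ger0_norm ?sqrtr_ge0 // -sqrtr_sqr ler_sqrt ?sqr_ge0.
Qed.

End SingularValues.

Section GradientMonotonicity.
Variables (R : realType) (n : nat).

Lemma mul_subr_subrXX_le (a b : R) (N : nat) : 0 <= a <= 1 -> 0 <= b <= 1 ->
  (a - b) * (a ^+ N - b ^+ N) <= N%:R * (a - b) ^+ 2.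
Proof.
move=> /andP[a0 a1] /andP[b0 b1].
rewrite subrXX mulrA -expr2 mulrC ler_wpM2r ?sqr_ge0 //.
rewrite -[N in N%:R]card_ord -sumr_const ler_sum // => i _.
by rewrite mulr_ile1 ?exprn_ge0 ?exprn_ile1.
Qed.

(* Both sides are affine in [c] and the right one decreases faster, so the worst
   case is [c = sqrt al * sqrt be], where this is [mul_subr_subrXX_le] for the
   square roots. *)
Lemma powS_cross_le (al be c : R) (K : nat) :
  0 <= al <= 1 -> 0 <= be <= 1 -> c ^+ 2 <= al * be ->
  be ^+ K.+1 + al ^+ K.+1 - c * (be ^+ K + al ^+ K)
    <= (2 * K%:R + 1) * (al + be - 2 * c).
Proof.
move=> /andP[al0 al1] /andP[be0 be1] c2_le.
set a := Num.sqrt al; set b := Num.sqrt be.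
have a0 : 0 <= a := sqrtr_ge0 al.
have b0 : 0 <= b := sqrtr_ge0 be.
have a1 : a <= 1 by rewrite -sqrtr1 ler_sqrt.
have b1 : b <= 1 by rewrite -sqrtr1 ler_sqrt.
have c_le : c <= a * b.
  by rewrite (le_trans (ler_norm c)) // -sqrtr_sqr -sqrtrM // ler_sqrt // mulr_ge0.
have slope : 0 <= 2 * (2 * K%:R + 1) - (be ^+ K + al ^+ K).
  have : al ^+ K <= 1 by rewrite exprn_ile1.
  have : be ^+ K <= 1 by rewrite exprn_ile1.
  have : 0 <= K%:R :> R by [].
  lra.
have slope_c : c * (2 * (2 * K%:R + 1) - (be ^+ K + al ^+ K))
    <= a * b * (2 * (2 * K%:R + 1) - (be ^+ K + al ^+ K)) by rewrite ler_wpM2r.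
have a01 : 0 <= a <= 1 by rewrite a0.
have b01 : 0 <= b <= 1 by rewrite b0.
have := mul_subr_subrXX_le (2 * K).+1 a01 b01.
have -> : ((2 * K).+1)%:R = 2 * K%:R + 1 :> R by rewrite -addn1 natrD natrM.
have powE t : t ^+ (2 * K).+1 = t * (t ^+ K) ^+ 2 by rewrite exprS -exprM mulnC.
have sqrE t : (t ^+ 2) ^+ K = (t ^+ K) ^+ 2 by rewrite -!exprM mulnC.
have al_sq : al = a ^+ 2 by rewrite sqr_sqrtr.
have be_sq : be = b ^+ 2 by rewrite sqr_sqrtr.
have at_ab : be ^+ K.+1 + al ^+ K.+1 - a * b * (be ^+ K + al ^+ K)
    - (2 * K%:R + 1) * (al + be - 2 * (a * b))
  = (a - b) * (a ^+ (2 * K).+1 - b ^+ (2 * K).+1) - (2 * K%:R + 1) * (a - b) ^+ 2.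
  by rewrite !powE al_sq be_sq (exprS (a ^+ 2)) (exprS (b ^+ 2)) !sqrE; ring.
lra.
Qed.

Lemma gradJ_inner_le (Q A : 'M[R]_n) q v m K (x b : 'cV[R]_n) :
  Q^T = Q -> A^T = A -> pdmx A -> 0 < m -> gfun A v x <= 1 -> gfun A v b <= 1 ->
  dot (gradJ Q A q v m K.+1 b - gradJ Q A q v m K.+1 x) (b - x)
    <= Lk Q A m K.+1 * dot (b - x) (b - x).
Proof.
move=> sQ sA pA m0 gx1 gb1.
set gx := gfun A v x; set gb := gfun A v b; set c := dot (x - v) (A *m (b - v)).
set cK := m * (4 * K.+1%:R - 2).
have bx : b - x = (b - v) - (x - v) by apply/matrixP => i j; rewrite !mxE; ring.
have diff : gradJ Q A q v m K.+1 b - gradJ Q A q v m K.+1 x =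
    Q *m (b - x) + (2 * m) *: (gb ^+ K *: (A *m (b - v)) - gx ^+ K *: (A *m (x - v))).
  rewrite /gradJ /gradf /gradg /= -/gx -/gb [Q *m (b - x)]mulmxBr.
  move: (Q *m b) (Q *m x) (A *m (b - v)) (A *m (x - v)) => Qb Qx Ab Ax.
  by apply/matrixP => i j; rewrite !mxE; ring.
have lhsE : dot (gradJ Q A q v m K.+1 b - gradJ Q A q v m K.+1 x) (b - x) =
    dot (b - x) (Q *m (b - x)) + 2 * m * (gb ^+ K * (gb - c) - gx ^+ K * (c - gx)).
  rewrite diff (dotDl (Q *m (b - x))) (dotZl (2 * m)) [dot (Q *m _) _]dotC.
  congr (_ + _ * _); rewrite bx (dotBl (gb ^+ K *: _)) !dotZl !(dotBr (b - v) (x - v)).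
  rewrite ![dot (A *m _) _]dotC.
  by rewrite (dot_mulmx_sym (b - v) (x - v) sA) /gx /gb /c /gfun; ring.
have rhsE : dot (b - x) ((Q + cK *: A) *m (b - x)) =
    dot (b - x) (Q *m (b - x)) + cK * (gx + gb - 2 * c).
  rewrite mulmxDl -scalemxAl (dotDr (Q *m (b - x))) (dotZr cK); congr (_ + _ * _).
  rewrite bx mulmxBr !(dotBl (b - v) (x - v)) !(dotBr (A *m (b - v)) (A *m (x - v))).
  by rewrite (dot_mulmx_sym (b - v) (x - v) sA) /gx /gb /c /gfun; ring.
have sym_cK : (Q + cK *: A)^T = Q + cK *: A by rewrite linearD linearZ /= sQ sA.
apply: le_trans (quadform_le_sigma_max _ sym_cK); rewrite lhsE rhsE lerD2l.
have cKE : cK = 2 * m * (2 * K%:R + 1) by rewrite /cK -addn1 natrD; ring.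
have gx01 : 0 <= gx <= 1 by rewrite gx1 andbT; apply: pdmx_psdmx.
have gb01 : 0 <= gb <= 1 by rewrite gb1 andbT; apply: pdmx_psdmx.
have bound := @powS_cross_le gx gb c K gx01 gb01 (quadform_cauchy_schwarz _ _ sA pA).
rewrite cKE -[2 * m * _ * _]mulrA ler_pM2l ?mulr_gt0 //.
rewrite !exprS in bound; lra.
Qed.

End GradientMonotonicity.

Section Boundary.
Variables (R : realType) (n : nat).
Implicit Types (Q A : 'M[R]_n) (q v b : 'cV[R]_n).

Lemma Lk1_le_LkS Q A m K : (0 < n)%N -> Q^T = Q -> psdmx Q -> A^T = A -> pdmx A ->
  0 < m -> Lk Q A m 1 <= Lk Q A m K.+1.
Proof.
move=> n0 sQ pQ sA pA m0; rewrite /Lk.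
have sym c : (Q + c *: A)^T = Q + c *: A by rewrite linearD linearZ /= sQ sA.
have qfE c h : dot h ((Q + c *: A) *m h) = dot h (Q *m h) + c * dot h (A *m h).
  by rewrite mulmxDl -scalemxAl dotDr dotZr.
have pA' := pdmx_psdmx pA.
apply: sigma_max_le => // h; rewrite !qfE; last first.
  by rewrite lerD2l ler_wpM2r // ler_pM2l // lerD2r ler_pM2l // ler1n.
have c0 : 0 <= m * (4 * 1%:R - 2) by apply: mulr_ge0; [exact: ltW | rewrite mulr1; lra].
by rewrite addr_ge0 // mulr_ge0.
Qed.

Lemma gradg_neq0 A v b : gfun A v b = 1 -> gradg A v b != 0.
Proof.
move=> gb1; apply/eqP => /eqP; rewrite scaler_eq0 pnatr_eq0 /= => /eqP Au0.
by move: gb1; rewrite /gfun Au0 dot0r => /eqP; rewrite eq_sym oner_eq0.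
Qed.

Lemma sqrt_sigma_min_le_vnorm_gradg A v b : A^T = A -> pdmx A -> gfun A v b = 1 ->
  2 * Num.sqrt (sigma_min A) <= vnorm (gradg A v b).
Proof.
move=> sA pA gb1; have := sigma_min_mul_quadform_le (b - v) sA (pdmx_psdmx pA).
rewrite -/(gfun A v b) gb1 mulr1 => sm_le.
rewrite -(ler_pXn2r (isT : (0 < 2)%N)) ?nnegrE ?mulr_ge0 ?sqrtr_ge0 ?vnorm_ge0 //.
rewrite exprMn sqr_sqrtr ?sqrtr_ge0 // vnorm_sqr /gradg dotZl dotZr expr2; lra.
Qed.

Lemma requirement2_descent Q A q v m gamma b :
  A^T = A -> pdmx A -> requirement2 Q A q v m -> 0 < gamma ->
  gamma * Lk Q A m 1 <= 1 -> gfun A v b = 1 ->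
  let w := gradf Q q b + m *: gradg A v b in
  is_true (gamma * dot w (A *m w) <= dot w (gradg A v b)).
Proof.
move=> sA pA req g0 gL1 gb1 w.
have := req b gb1; rewrite /= vnorm_sqr -/w; set G := gradg A v b => req_b.
have [->|w0] := eqVneq w 0; first by rewrite mulmx0 dot0r dot0l mulr0.
set sA' := sigma_max A; set L1 := Lk Q A m 1.
have W0 : 0 < dot w w by rewrite dot_gt0.
have NG0 : 0 < vnorm G by rewrite sqrtr_gt0 dot_gt0 gradg_neq0.
have NG_ge := sqrt_sigma_min_le_vnorm_gradg sA pA gb1; rewrite -/G in NG_ge.
have L10 : 0 <= L1 := sqrtr_ge0 _.
have rA0 : 0 <= rA A by rewrite divr_ge0 ?sqrtr_ge0.
have wG0 : 0 <= dot w G.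
  rewrite leNgt; apply/negP => wGneg.
  have : 2 * rA A * L1 * dot w G <= 0.
    exact: mulr_ge0_le0 (mulr_ge0 (mulr_ge0 (ler0n _ 2) rA0) L10) (ltW wGneg).
  by rewrite leNgt (lt_le_trans _ req_b) // mulr_gt0.
apply: le_trans (ler_wpM2l (ltW g0) (quadform_le_sigma_max w sA)) _; rewrite -/sA'.
have [->|sA'_neq0] := eqVneq sA' 0; first by rewrite mul0r mulr0.
set s := Num.sqrt (sigma_min A) in NG_ge *.
have rA_sA' : sA' * rA A = s by rewrite mulrCA divff // mulr1.
have s0 : 0 <= s := sqrtr_ge0 _.
have sA'0 : 0 <= sA' := sqrtr_ge0 _.
have c1 : gamma * (sA' * dot w w) * vnorm G <= 2 * s * (gamma * L1) * dot w G.
  have -> : 2 * s * (gamma * L1) * dot w G = gamma * sA' * (2 * rA A * L1 * dot w G).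
    by rewrite -rA_sA'; ring.
  have -> : gamma * (sA' * dot w w) * vnorm G = gamma * sA' * (dot w w * vnorm G) by ring.
  by apply: ler_wpM2l req_b; rewrite mulr_ge0 // ltW.
have c2 : 2 * s * (gamma * L1) * dot w G <= vnorm G * dot w G.
  apply: ler_wpM2r => //; apply: le_trans NG_ge.
  by rewrite -[X in _ <= X]mulr1 ler_wpM2l ?mulr_ge0.
by rewrite -(ler_pM2r NG0) [dot w G * _]mulrC (le_trans c1 c2).
Qed.

Lemma boundary_step_inC Q A q v m K gamma b :
  (0 < n)%N -> Q^T = Q -> psdmx Q -> A^T = A -> pdmx A -> 0 < m ->
  requirement2 Q A q v m -> 0 < gamma -> gamma * Lk Q A m K.+1 <= 1 ->
  gfun A v b = 1 -> gfun A v (b - gamma *: gradJ Q A q v m K.+1 b) <= 1.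
Proof.
move=> n0 sQ pQ sA pA m0 req g0 gL gb1.
have gL1 : gamma * Lk Q A m 1 <= 1.
  exact: le_trans (ler_wpM2l (ltW g0) (Lk1_le_LkS K n0 sQ pQ sA pA m0)) gL.
have := requirement2_descent sA pA req g0 gL1 gb1.
have -> : gradJ Q A q v m K.+1 b = gradf Q q b + m *: gradg A v b.
  by rewrite /gradJ /= gb1 expr1n mulr1.
rewrite /=; set w := gradf Q q b + m *: gradg A v b => descent.
have wG : dot w (gradg A v b) = 2 * dot (b - v) (A *m w).
  by rewrite dotZr (dot_mulmx_sym w _ sA).
have gbE : dot (b - v) (A *m (b - v)) = 1 := gb1.
rewrite /gfun (_ : b - gamma *: w - v = 1 *: (b - v) + (- gamma) *: w); last first.
  by rewrite scale1r scaleNr addrAC.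
rewrite quadform_lincomb // gbE.
have -> : 1 ^+ 2 * 1 + 2 * 1 * - gamma * dot (b - v) (A *m w)
    + (- gamma) ^+ 2 * dot w (A *m w)
  = 1 - gamma * (2 * dot (b - v) (A *m w) - gamma * dot w (A *m w)) by ring.
by rewrite gerBl mulr_ge0 ?subr_ge0 -?wG // ltW.
Qed.

End Boundary.

Section EllipsoidInvariance.
Variables (R : realType) (n : nat).
Implicit Types (A : 'M[R]_n) (v x p : 'cV[R]_n).

Lemma quadratic_root_ge0 (c a b : R) : c <= 1 -> 0 < a ->
  exists2 s, 0 <= s & c + 2 * s * b + s ^+ 2 * a = 1.
Proof.
move=> c1 a0; set D := b ^+ 2 + a * (1 - c).
have bD : b ^+ 2 <= D by rewrite lerDl mulr_ge0 ?subr_ge0 // ltW.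
have D0 : 0 <= D := le_trans (sqr_ge0 b) bD.
have b_le : b <= Num.sqrt D.
  by rewrite (le_trans (ler_norm b)) // -sqrtr_sqr ler_sqrt.
exists ((Num.sqrt D - b) / a); first by rewrite divr_ge0 ?subr_ge0 // ltW.
have a_neq0 : a != 0 by rewrite gt_eqF.
apply/eqP; rewrite -subr_eq0.
have -> : c + 2 * ((Num.sqrt D - b) / a) * b + ((Num.sqrt D - b) / a) ^+ 2 * a - 1
    = (Num.sqrt D ^+ 2 - D) / a by rewrite /D; field.
by rewrite sqr_sqrtr // subrr mul0r.
Qed.

Lemma gfun_ray_boundary A v x p : A^T = A -> pdmx A -> gfun A v x <= 1 -> p != 0 ->
  exists2 s, 0 <= s & gfun A v (x + s *: p) = 1.
Proof.
move=> sA pA gx1 p0.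
have [s s0 root] := quadratic_root_ge0 (dot (x - v) (A *m p)) gx1 (pA p p0).
exists s => //; rewrite /gfun (_ : x + s *: p - v = 1 *: (x - v) + s *: p); last first.
  by rewrite scale1r addrAC.
by rewrite quadform_lincomb // expr1n !mul1r mulr1.
Qed.

Lemma ellipsoid_step_invariant A v (F : 'cV[R]_n -> 'cV[R]_n) (L gamma : R) :
  A^T = A -> pdmx A -> 0 < gamma -> gamma * L <= 1 ->
  (forall x b, gfun A v x <= 1 -> gfun A v b <= 1 ->
     dot (F b - F x) (b - x) <= L * dot (b - x) (b - x)) ->
  (forall b, gfun A v b = 1 -> gfun A v (b - gamma *: F b) <= 1) ->
  forall x, gfun A v x <= 1 -> gfun A v (x - gamma *: F x) <= 1.
Proof.
move=> sA pA g0 gL F_lip F_boundary x gx1.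
rewrite /gfun; set e := x - gamma *: F x - v.
have [->|e0] := eqVneq e 0; first by rewrite dot0l ler01.
have E0 : 0 < dot e (A *m e) := pA e e0.
set p := A *m e in E0 *.
have p0 : p != 0 by apply: contraTneq E0 => ->; rewrite dot0r ltxx.
have [s s0 gb1] := gfun_ray_boundary sA pA gx1 p0.
have gb_le : gfun A v (x + s *: p) <= 1 by rewrite gb1.
have := F_boundary _ gb1; rewrite /gfun.
set b := x + s *: p; set eb := b - gamma *: F b - v => Eb1.
have bx : b - x = s *: p by rewrite addrAC subrr add0r.
have eb_e : eb - e = s *: p - gamma *: (F b - F x).
  by rewrite /eb /e -bx scalerBr; apply/matrixP => i j; rewrite !mxE; ring.
have ascent : 0 <= dot (eb - e) p.
  have lip := F_lip x b gx1 gb_le; rewrite bx !dotZr !dotZl in lip.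
  rewrite eb_e (dotBl (s *: p)) !dotZl; have [s_eq0|s_neq0] := eqVneq s 0.
    by rewrite /b s_eq0 scale0r addr0 subrr dot0l mulr0 mul0r subrr.
  have s_gt0 : 0 < s by rewrite lt_def s_neq0.
  have pp0 : 0 <= dot p p := dot_ge0 p.
  have Fp : dot (F b - F x) p <= L * (s * dot p p).
    by rewrite -(ler_pM2l s_gt0) (le_trans lip) // mulrCA.
  rewrite subr_ge0 (le_trans (ler_wpM2l (ltW g0) Fp)) // mulrA.
  by rewrite -[X in _ <= X]mul1r ler_wpM2r ?mulr_ge0 // ltW.
have E_le : dot e p <= dot eb p by rewrite -subr_ge0 -dotBl.
have cs := quadform_cauchy_schwarz eb e sA pA; rewrite -/p in cs.
have : dot e p * dot e p <= 1 * dot e p.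
  apply: le_trans (_ : dot eb p ^+ 2 <= _); first by rewrite expr2 ler_pM // ltW.
  by apply: le_trans cs _; rewrite ler_wpM2r // ltW.
by rewrite ler_pM2r.
Qed.

End EllipsoidInvariance.

Theorem proposition2 (R : realType) (n : nat)
  (Q A : 'M[R]_n) (q v : 'cV[R]_n) (m : R) (k : nat) (gamma : R) (x : 'cV[R]_n) :
  is_symmetric Q -> psdmx Q -> is_symmetric A -> pdmx A ->
  0 < m -> requirement2 Q A q v m ->
  (0 < k)%N -> 0 < gamma -> gamma <= 1 / Lk Q A m k ->
  inC A v x -> inC A v (x - gamma *: gradJ Q A q v m k x).
Proof.
rewrite /is_symmetric /inC => sQ pQ sA pA m0 req k0 g0 gL.
have [n0|n_gt0] := posnP n.
  by move=> _; subst n; rewrite /gfun dotE big_ord0.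
case: k k0 gL => // K _ gL.
have L_gt0 : 0 < Lk Q A m K.+1.
  rewrite lt_def sqrtr_ge0 andbT; apply: contraTneq gL => ->.
  by rewrite invr0 mulr0 -ltNge.
have gL' : gamma * Lk Q A m K.+1 <= 1 by rewrite -ler_pdivlMr // mul1r -div1r.
apply: (ellipsoid_step_invariant sA pA g0 gL').
  by move=> y b; apply: gradJ_inner_le.
by move=> b; apply: boundary_step_inC.
Qed.
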